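(* For every integer $k\ge2$, $\displaystyle\lim_{n\to\infty}\chi''_c(G_{k,n})=k+1$.
   Context: A half-edge has exactly one end vertex. Let $H_k$ be obtained from $K_{k,k}$ by deleting one vertex but keeping its $k$ incident edges as half-edges, and let $H'_k$ be obtained from $H_k$ by deleting $k-2$ of its half-edges. For $n\ge1$ let $B_1,\ldots,B_n$ be copies of $H'_k$ with half-edges $f_i,f'_i$ in $B_i$, and let $B_0$ be a single vertex $u$ with two half-edges $f_0,f'_{n+1}$. $G_{k,n}$ is obtained from the disjoint union of $B_0,\ldots,B_n$ by joining $f_i$ and $f'_{i+1}$ into an edge for each $0\le i\le n$. For integers $p\ge q\ge1$, a $(p,q)$-total colouring of a graph assigns colours in $\{0,\ldots,p-1\}$ to vertices and edges such that $q\le|c(a)-c(b)|\le p-q$ whenever $a,b$ are adjacent vertices, edges sharing an end, or an incident vertex–edge pair; $\chi''_c(G)=\inf\{p/q\mid G \text{ has a } (p,q)\text{-total colouring}\}$. *)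

From HB Require Import structures.
From mathcomp Require Import all_boot all_order all_algebra.
From mathcomp Require Import all_classical all_reals all_analysis.
Set Implicit Arguments. Unset Strict Implicit. Unset Printing Implicit Defensive.
Import Order.TTheory GRing.Theory Num.Theory.

(* The colour of the edge
   xy is [ce x y] (required to be symmetric, so it is really a function of
   the unordered edge {x,y}). *)

Definition cdist (a b : nat) : nat := (a - b) + (b - a).

Definition pq_ok (p q a b : nat) : Prop := q <= cdist a b /\ cdist a b <= p - q.

Definition is_total_colouring (T : finType) (e : rel T) (p q : nat)
  (cv : T -> nat) (ce : T -> T -> nat) : Prop :=
  [/\ (forall x, cv x < p),
      (forall x y, e x y -> ce x y < p /\ ce x y = ce y x),
      (forall x y, e x y -> pq_ok p q (cv x) (cv y)),
      (forall x y, e x y -> pq_ok p q (cv x) (ce x y))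
    &
      (forall x y z, e x y -> e x z -> y != z -> pq_ok p q (ce x y) (ce x z))].

Definition has_total_colouring (T : finType) (e : rel T) (p q : nat) : Prop :=
  exists cv ce, @is_total_colouring T e p q cv ce.

Definition circ_total_chi (R : realType) (T : finType) (e : rel T) : R :=
  inf [set x : R | exists p q : nat,
         [/\ (1 <= q)%N, (q <= p)%N, x = (p%:R / q%:R)%R & has_total_colouring e p q]].

(* Vertices: [None] is the vertex u of B_0; [Some (i, inl a)] is the vertex a
   of the k-vertex side A of block B_{i+1} (the side carrying the half-edges),
   [Some (i, inr b)] is the vertex b of the (k-1)-vertex side of B_{i+1}.
   In B_{i+1} the kept half-edge f_{i+1} is at A-vertex 0 and f'_{i+1} at
   A-vertex 1.  Joining f_i with f'_{i+1}:
     u -- (block 1, A1);  (block i, A0) -- (block i+1, A1);  (block n, A0) -- u. *)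
Definition gvert (k n : nat) : finType := option ('I_n * ('I_k + 'I_k.-1)).

Definition gadj0 (k n : nat) (x y : gvert k n) : bool :=
  match x, y with
  | Some (i, inl a), Some (j, inr _) => i == j
  | Some (i, inl a), Some (j, inl b) =>
      [&& val a == 0%N, val b == 1%N & (val i).+1 == val j]
  | None, Some (j, inl b) =>
      ((val b == 1%N) && (val j == 0%N)) || ((val b == 0%N) && ((val j).+1 == n))
  | _, _ => false
  end.

Definition gadj (k n : nat) : rel (gvert k n) :=
  fun x y => gadj0 x y || gadj0 y x.

From HB Require Import structures.
From mathcomp Require Import all_boot all_order all_algebra.
From mathcomp Require Import all_classical all_reals all_analysis.
From mathcomp Require Import zify lra.
Set Implicit Arguments. Unset Strict Implicit. Unset Printing Implicit Defensive.
Import Order.TTheory GRing.Theory Num.Theory.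
Import numFieldNormedType.Exports.

(* A vertex on the (k-1)-side of a block has degree k, and its colour together
   with the colours of its k edges are k+1 points of the cycle Z/p at pairwise
   distance at least q; hence p >= (k+1) q and chi''_c(G_{k,n}) >= k+1.
   Conversely let q = (n-1)/2 (rounded down) and p = (k+1) q + 1.  Block i is
   coloured with the multiples c q (0 <= c <= k) shifted by i: the (k-1)-side
   gets i, the A-vertex a gets (a+1) q + i, and the edges inside the block get
   (c q + i) for the classes c = 1..k of a proper edge colouring of K_{k,k-1}
   that avoids a+1 at a.  The edge from block i to block i+1 and the edge from
   u to block i get colour i, and u gets q.  The unit shift between consecutive
   blocks keeps these colours apart, and the spare colour of p is what lets
   the two edges at u, coloured 0 and n-1 = 2q or 2q+1, be q-separated.  So
   k+1 <= chi''_c(G_{k,n}) <= k+1 + 1/q. *)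

Lemma pq_okC p q a b : pq_ok p q a b -> pq_ok p q b a.
Proof. rewrite /pq_ok /cdist; lia. Qed.

Lemma modn_wrap m p : m < 2 * p -> m %% p = if m < p then m else m - p.
Proof.
case: (ltnP m p) => [lt_mp _|le_pm lt_m2p]; first by rewrite modn_small.
by rewrite -{1}(subnK le_pm) modnDr modn_small; lia.
Qed.

Lemma pq_ok_modn p q d X Y : 0 < p -> q <= d <= p - q -> X = Y + d ->
  pq_ok p q (X %% p) (Y %% p).
Proof.
move=> p_gt0 hd ->; rewrite -modnDml.
have := ltn_pmod Y p_gt0; set y := Y %% p => lt_yp.
rewrite modn_wrap; last by lia.
by case: (ltnP (y + d) p) => h /=; rewrite /pq_ok /cdist; lia.
Qed.

Lemma pq_ok_mul_modn p q k c c' i : 0 < q -> k.+1 * q <= p ->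
  c <= k -> c' <= k -> c != c' ->
  pq_ok p q ((c * q + i) %% p) ((c' * q + i) %% p).
Proof.
wlog lt_cc' : c c' / c < c'.
  move=> wlog_lt q_gt0 hp hc hc' neq; case: (ltngtP c c') => [lt|lt|eq].
  - exact: wlog_lt.
  - by apply: pq_okC; apply: wlog_lt; rewrite // eq_sym.
  - by rewrite eq eqxx in neq.
move=> q_gt0 hp hc hc' _; apply: pq_okC.
apply: (@pq_ok_modn _ _ ((c' - c) * q)); first by nia.
- by apply/andP; split; nia.
- have : c * q <= c' * q by rewrite leq_mul2r ltnW ?orbT.
  by rewrite mulnBl; lia.
Qed.

Lemma pq_ok_arcs_disjoint p q a b t t' : pq_ok p q a b -> a < p -> b < p ->
  t < q -> t' < q -> (a + t) %% p != (b + t') %% p.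
Proof.
wlog lt_ab : a b t t' / a < b.
  move=> wlog_lt hab ha hb ht ht'; case: (ltngtP a b) => [lt|lt|eq].
  - exact: wlog_lt.
  - by rewrite eq_sym; apply: wlog_lt => //; apply: pq_okC.
  - by move: hab; rewrite /pq_ok /cdist eq; lia.
rewrite /pq_ok /cdist => hab ha hb ht ht'.
rewrite (modn_small (m := a + t)); last by lia.
by rewrite modn_wrap; [case: (ltnP (b + t') p) => h /=; apply/eqP; lia | lia].
Qed.

Lemma pq_ok_family_card p q (I : finType) (f : I -> nat) : 0 < q -> 1 < #|I| ->
  (forall i, f i < p) -> (forall i j, i != j -> pq_ok p q (f i) (f j)) ->
  #|I| * q <= p.
Proof.
move=> q_gt0 I_gt1 lt_fp ok_f.
have /card_gt1P [i0 [j0 [_ _ neq0]]] := I_gt1.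
have p_gt0 : 0 < p by have := lt_fp i0; lia.
have q_le_p : q <= p by have := ok_f _ _ neq0; rewrite /pq_ok /cdist; lia.
pose g (x : I * 'I_q) : 'I_p := Ordinal (ltn_pmod (f x.1 + x.2) p_gt0).
suff g_inj : injective g.
  by have := leq_card g g_inj; rewrite card_prod !card_ord.
move=> [i t] [j t'] /(congr1 val) /= eq_g.
case: (eqVneq i j) eq_g => [<- /eqP|neq eq_g]; last first.
  have := pq_ok_arcs_disjoint (ok_f _ _ neq) (lt_fp i) (lt_fp j) (ltn_ord t) (ltn_ord t').
  by rewrite eq_g eqxx.
rewrite eqn_modDl !modn_small; try by have := ltn_ord t; have := ltn_ord t'; lia.
by move/eqP/val_inj ->.
Qed.

Lemma total_colouring_star_bound (T I : finType) (e : rel T) p q x (g : I -> T) :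
  0 < q -> 0 < #|I| -> injective g -> (forall i, e x (g i)) ->
  has_total_colouring e p q -> #|I|.+1 * q <= p.
Proof.
move=> q_gt0 I_gt0 g_inj e_xg [cv [ce [lt_cv lt_ce ok_vv ok_ve ok_ee]]].
pose f (o : option I) := if o is Some i then ce x (g i) else cv x.
rewrite -card_option; apply: (pq_ok_family_card (f := f)) => //.
- by rewrite card_option ltnS.
- by case=> [i|] //=; case: (lt_ce _ _ (e_xg i)).
case=> [i|] [j|] //= neq.
- by apply: ok_ee => //; apply: contra neq => /eqP /g_inj ->.
- exact/pq_okC/ok_ve.
- exact: ok_ve.
Qed.

Variant gadj_spec k n : gvert k n -> gvert k n -> Prop :=
| GAdjAB (i : 'I_n) (a : 'I_k) (b : 'I_k.-1) :
    gadj_spec (Some (i, inl a)) (Some (i, inr b))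
| GAdjBA (i : 'I_n) (a : 'I_k) (b : 'I_k.-1) :
    gadj_spec (Some (i, inr b)) (Some (i, inl a))
| GAdjNext (i j : 'I_n) (a a' : 'I_k) : a = 0 :> nat -> a' = 1 :> nat -> i.+1 = j ->
    gadj_spec (Some (i, inl a)) (Some (j, inl a'))
| GAdjPrev (i j : 'I_n) (a a' : 'I_k) : a = 0 :> nat -> a' = 1 :> nat -> i.+1 = j ->
    gadj_spec (Some (j, inl a')) (Some (i, inl a))
| GAdjUFirst (j : 'I_n) (a : 'I_k) : j = 0 :> nat -> a = 1 :> nat ->
    gadj_spec None (Some (j, inl a))
| GAdjFirstU (j : 'I_n) (a : 'I_k) : j = 0 :> nat -> a = 1 :> nat ->
    gadj_spec (Some (j, inl a)) None
| GAdjULast (j : 'I_n) (a : 'I_k) : j.+1 = n -> a = 0 :> nat ->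
    gadj_spec None (Some (j, inl a))
| GAdjLastU (j : 'I_n) (a : 'I_k) : j.+1 = n -> a = 0 :> nat ->
    gadj_spec (Some (j, inl a)) None.

Lemma gadjP k n (x y : gvert k n) : gadj x y -> gadj_spec x y.
Proof.
rewrite /gadj; case: x => [[i [a|b]]|]; case: y => [[j [a'|b']]|] //=; rewrite ?orbF.
- by case/orP => /and3P[/eqP ? /eqP ? /eqP ?]; [apply: GAdjNext | apply: GAdjPrev].
- by move/eqP <-; apply: GAdjAB.
- by case/orP => /andP[/eqP ? /eqP ?]; [apply: GAdjFirstU | apply: GAdjLastU].
- by move/eqP <-; apply: GAdjBA.
- by case/orP => /andP[/eqP ? /eqP ?]; [apply: GAdjUFirst | apply: GAdjULast].
Qed.

Section GColouring.
Variables (k n q : nat).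
Hypotheses (k_ge2 : 2 <= k) (q_gt0 : 0 < q) (le_2q_n : 2 * q <= n.-1) (le_n_2q1 : n.-1 <= 2 * q + 1).
Local Notation p := (k.+1 * q + 1).

(* [(a + b + 1) mod k] is a Latin-square edge colouring of K_{k,k-1} in which
   the vertex a of the k-side misses the class a. *)
Definition edge_class (a : 'I_k) (b : 'I_k.-1) : nat := 1 + (a + b + 1) %% k.

Lemma edge_class_bound a b : 1 <= edge_class a b <= k.
Proof. by rewrite /edge_class; have := ltn_pmod (a + b + 1) (ltnW k_ge2); lia. Qed.

Lemma edge_class_neq (a : 'I_k) (b : 'I_k.-1) : edge_class a b != a.+1.
Proof.
rewrite /edge_class add1n eqSS -addnA -[X in _ == X](modn_small (ltn_ord a)).
rewrite -[X in _ == X %% _]addn0 eqn_modDl mod0n modn_small ?addn1 //.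
by have := ltn_ord b; lia.
Qed.

Lemma edge_class_injl (a a' : 'I_k) (b : 'I_k.-1) :
  a != a' -> edge_class a b != edge_class a' b.
Proof.
by rewrite /edge_class eqn_add2l -!addnA ![_ + (b + 1)]addnC eqn_modDl !modn_small.
Qed.

Lemma edge_class_injr (a : 'I_k) (b b' : 'I_k.-1) :
  b != b' -> edge_class a b != edge_class a b'.
Proof.
rewrite /edge_class eqn_add2l -!addnA eqn_modDl !modn_small ?eqn_add2r //.
- by have := ltn_ord b'; lia.
- by have := ltn_ord b; lia.
Qed.

Definition vcol (x : gvert k n) : nat :=
  match x with
  | None => q
  | Some (i, inl a) => a.+1 * q + i
  | Some (i, inr _) => i
  end.

Definition ecol (x y : gvert k n) : nat :=
  match x, y with
  | None, Some (j, inl _) | Some (j, inl _), None => j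
  | Some (i, inl a), Some (_, inr b) | Some (_, inr b), Some (i, inl a) =>
      edge_class a b * q + i
  | Some (i, inl _), Some (j, inl _) => minn i j
  | _, _ => 0
  end.

Lemma ecolC x y : ecol x y = ecol y x.
Proof. by case: x => [[i [a|b]]|]; case: y => [[j [a'|b']]|] //=; rewrite minnC. Qed.

Lemma edge_class_mul_bound a b : q <= edge_class a b * q <= k * q.
Proof.
have /andP[ge1 lek] := edge_class_bound a b.
by rewrite -{1}(mul1n q) !leq_mul2r ge1 lek !orbT.
Qed.

Lemma double_q_le : 2 * q <= k * q.
Proof. by rewrite leq_mul2r k_ge2 orbT. Qed.

Local Ltac pq_ok_lia := match goal with |- pq_ok _ _ (?X %% _) (?Y %% _) =>
  first [ apply: (@pq_ok_modn _ _ (X - Y)); lia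
        | apply: pq_okC; apply: (@pq_ok_modn _ _ (Y - X)); lia ] end.

Local Ltac add_ord_bounds := repeat match goal with o : 'I_n |- _ =>
  lazymatch goal with _ : is_true (nat_of_ord o < n) |- _ => fail | _ => have := ltn_ord o => ? end end.

Local Ltac add_edge_class_bounds := repeat match goal with |- context [edge_class ?a ?b] =>
  lazymatch goal with _ : is_true (q <= edge_class a b * q <= _) |- _ => fail
  | _ => have := edge_class_mul_bound a b => ? end end.

Lemma vcol_ok x y : gadj_spec x y -> pq_ok p q (vcol x %% p) (vcol y %% p).
Proof.
have ? := double_q_le.
case=> [i a b|i a b|i j a a' ha ha' hij|i j a a' ha ha' hij|j a hj ha|j a hj ha|j a hj ha|j a hj ha] /=.
- by apply: (@pq_ok_mul_modn _ _ k a.+1 0) => //; lia.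
- by apply: (@pq_ok_mul_modn _ _ k 0 a.+1) => //; lia.
all: rewrite ?ha ?ha' ?hj; pq_ok_lia.
Qed.

Lemma vcol_ecol_ok x y : gadj_spec x y -> pq_ok p q (vcol x %% p) (ecol x y %% p).
Proof.
have ? := double_q_le.
case=> [i a b|i a b|i j a a' ha ha' hij|i j a a' ha ha' hij|j a hj ha|j a hj ha|j a hj ha|j a hj ha] /=.
- apply: (@pq_ok_mul_modn _ _ k) => //; first exact: leq_addr.
    by case/andP: (edge_class_bound a b).
  by rewrite eq_sym edge_class_neq.
- by add_edge_class_bounds; pq_ok_lia.
all: pq_ok_lia.
Qed.

Lemma pq_ok_edge_class a b a' b' i : edge_class a b != edge_class a' b' ->
  pq_ok p q ((edge_class a b * q + i) %% p) ((edge_class a' b' * q + i) %% p).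
Proof.
apply: (@pq_ok_mul_modn _ _ k) => //; first exact: leq_addr.
- by case/andP: (edge_class_bound a b).
- by case/andP: (edge_class_bound a' b').
Qed.

Lemma ecol_ok x y z :
  gadj_spec x y -> gadj_spec x z -> y != z -> pq_ok p q (ecol x y %% p) (ecol x z %% p).
Proof.
have ? := double_q_le.
case=> [i a b|i a b|i j a a' ha ha' hij|i j a a' ha ha' hij|j a hj ha|j a hj ha|j a hj ha|j a hj ha] hxz;
  inversion hxz; subst => /= neq.
all: try by rewrite eqxx in neq.
all: try (apply: pq_ok_edge_class;
  first [apply: edge_class_injr | apply: edge_class_injl]; by apply: contra neq => /eqP->).
all: add_ord_bounds; add_edge_class_bounds; try pq_ok_lia.
(* What remains are two edges to the same neighbour, or two edges leaving the
   block at one A-vertex, which carries at most one half-edge. *)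
all: exfalso; try lia.
all: move/eqP: neq; apply; congr (Some (_, inl _)); apply: ord_inj; lia.
Qed.

Lemma gadj_total_colouring : has_total_colouring (@gadj k n) p q.
Proof.
exists (fun x => vcol x %% p), (fun x y => ecol x y %% p); split.
- by move=> x; rewrite ltn_pmod // addn1.
- by move=> x y _; rewrite ltn_pmod ?addn1 // ecolC.
- by move=> x y /gadjP; apply: vcol_ok.
- by move=> x y /gadjP; apply: vcol_ecol_ok.
- by move=> x y z /gadjP hxy /gadjP; apply: ecol_ok.
Qed.
End GColouring.

Lemma gadj_total_colouring_lb k n p q : 2 <= k -> 0 < n -> 0 < q ->
  has_total_colouring (@gadj k n) p q -> k.+1 * q <= p.
Proof.
move=> k_ge2 n_gt0 q_gt0.
have k1_gt0 : 0 < k.-1 by lia.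
pose x : gvert k n := Some (Ordinal n_gt0, inr (Ordinal k1_gt0)).
have := @total_colouring_star_bound _ 'I_k _ p q x (fun a => Some (Ordinal n_gt0, inl a)).
rewrite card_ord; apply=> //; first exact: ltnW.
by move=> a a' [].
Qed.

Lemma half_predn_bounds n : 3 <= n ->
  [/\ 0 < (n.-1)./2, 2 * (n.-1)./2 <= n.-1 & n.-1 <= 2 * (n.-1)./2 + 1].
Proof.
move=> n_ge3; have := odd_double_half n.-1; rewrite -muln2.
by case: odd => /= h; split; lia.
Qed.

Local Open Scope classical_set_scope.
Local Open Scope ring_scope.

Section CircTotalChi.
Variables (R : realType) (T : finType) (e : rel T).

Lemma circ_total_chi_le p q : (0 < q <= p)%N -> has_total_colouring e p q ->
  circ_total_chi R e <= p%:R / q%:R.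
Proof.
case/andP=> q_gt0 le_qp col; apply: ge_inf; last by exists p, q.
by exists 0 => _ [p' [q' [_ _ -> _]]]; rewrite divr_ge0.
Qed.

Lemma circ_total_chi_ge (m p0 q0 : nat) : (0 < q0 <= p0)%N -> has_total_colouring e p0 q0 ->
  (forall p q, (0 < q)%N -> has_total_colouring e p q -> (m * q <= p)%N) ->
  m%:R <= circ_total_chi R e.
Proof.
case/andP=> q0_gt0 le_qp0 col0 lb; apply: lb_le_inf; first by exists (p0%:R / q0%:R), p0, q0.
move=> _ [p [q [q_gt0 _ -> col]]].
by rewrite ler_pdivlMr ?ltr0n // -natrM ler_nat lb.
Qed.
End CircTotalChi.

Lemma gadj_circ_total_chi_bounds (R : realType) k n : (2 <= k)%N -> (3 <= n)%N ->
  (k.+1)%:R <= circ_total_chi R (@gadj k n) <= (k.+1)%:R + ((n.-1)./2)%:R^-1.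
Proof.
move=> k_ge2 n_ge3; have [q_gt0 le_2q_n le_n_2q1] := half_predn_bounds n_ge3.
set q := (n.-1)./2 in q_gt0 le_2q_n le_n_2q1 *.
have col := gadj_total_colouring k_ge2 q_gt0 le_2q_n le_n_2q1.
have le_qp : (0 < q <= k.+1 * q + 1)%N by apply/andP; split => //; lia.
apply/andP; split.
  apply: (circ_total_chi_ge _ le_qp col) => p q' q'_gt0.
  exact: gadj_total_colouring_lb (ltnW (ltnW n_ge3)) q'_gt0.
apply: le_trans (circ_total_chi_le R le_qp col) _.
by rewrite natrD natrM mulrDl mulfK ?pnatr_eq0 -?lt0n // mul1r.
Qed.

Theorem corollary5 (R : realType) (k : nat) (hk : (2 <= k)%N) :
  (fun n : nat => circ_total_chi R (@gadj k n)) @ \oo --> ((k.+1)%:R : R).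
Proof.
apply/cvgrPdist_le => eps eps_gt0.
have lt_inv_M := truncnS_gt eps^-1; set M := Num.truncn eps^-1 in lt_inv_M.
exists (2 * M + 5)%N => // n /= le_Mn.
have n_ge3 : (3 <= n)%N by lia.
have /andP[lb ub] := gadj_circ_total_chi_bounds R hk n_ge3.
have [q_gt0 le_2q_n _] := half_predn_bounds n_ge3.
have inv_q_le : ((n.-1)./2)%:R^-1 <= eps.
  rewrite -[eps]invrK lef_pV2 ?posrE ?invr_gt0 ?ltr0n //.
  by apply: le_trans (ltW lt_inv_M) _; rewrite ler_nat; lia.
rewrite ler_norml; apply/andP; split; lra.
Qed.
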